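(* Let $d\ge1$. For any $\nu>0$ and any $M\ge\big[-d\cdot W_{-1}\big(-\nu^{2/d}/(2\pi e)\big)\big]^{1/2}$, it holds that \[\int_{\{u\in\mathbb{R}^d:\ \|u\|\ge M\}}e^{-\|u\|^2/2}\,du\le\nu.\]
   Context: $W_{-1}$ denotes the negative real branch of the Lambert $W$ function, i.e., the inverse of $t\mapsto te^t$ restricted to $(-\infty,-1]$, mapping $[-1/e,0)$ onto $(-\infty,-1]$; by convention $W_{-1}(t)=0$ if $t<-1/e$. $\|\cdot\|$ is the Euclidean norm. *)

From HB Require Import structures.
From mathcomp Require Import all_boot all_order all_algebra.
From mathcomp Require Import all_classical all_reals all_analysis.
Set Implicit Arguments. Unset Strict Implicit. Unset Printing Implicit Defensive.
Import Order.TTheory GRing.Theory Num.Theory.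
Local Open Scope classical_set_scope.
Local Open Scope ring_scope.

(* Negative real branch of the Lambert W function: for t in [-1/e,0) the
   unique w <= -1 with w e^w = t; by convention 0 otherwise (for t >= 0 and
   t < -1/e no such w exists, and it is unique when it exists). *)
Definition lambertWm1 {R : realType} (t : R) : R :=
  xget 0 [set w : R | w <= -1 /\ w * expR w = t].

Definition eucl_norm {R : realType} {d : nat} (u : d.-tuple R) : R :=
  Num.sqrt (\sum_(i < d) (tnth u i) ^+ 2).

(* Integral over R^d (w.r.t. d-dimensional Lebesgue measure) of a
   nonnegative function, as the iterated Lebesgue integral
   (equal to the product-measure integral by Tonelli). *)
Fixpoint integral_Rn {R : realType} (d : nat) : (d.-tuple R -> \bar R) -> \bar R :=
  match d with
  | 0 => fun f => f [tuple]
  | n.+1 => fun f =>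
      (\int[@lebesgue_measure R]_(x in [set: R])
         integral_Rn (fun t : n.-tuple R => f [tuple of x :: t]))%E
  end.

From HB Require Import structures.
From mathcomp Require Import all_boot all_order all_algebra.
From mathcomp Require Import all_classical all_reals all_analysis.
From mathcomp Require Import ring lra measurable_realfun normal_distribution.
Set Implicit Arguments. Unset Strict Implicit. Unset Printing Implicit Defensive.
Import Order.TTheory GRing.Theory Num.Theory numFieldNormedType.Exports.
Local Open Scope classical_set_scope.
Local Open Scope ring_scope.

(* For t >= 1 and |u| >= M >= 0,
     e^(-|u|^2/2) <= e^(-(1 - 1/t) M^2/2) e^(-|u|^2/(2t)),
   and the last factor integrates over R^d to (2 pi t)^(d/2).  If
   nu^(2/d) >= 2 pi, then t = 1 already gives a bound <= nu.  Otherwise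
   m := -W_{-1}(-nu^(2/d)/(2 pi e)) >= 1 satisfies 2 pi e m e^-m = nu^(2/d),
   and t = m together with M^2 >= d m bounds the integral by
   (2 pi m e^(1-m))^(d/2) = nu. *)

Section lambertWm1.
Variable R : realType.
Implicit Types x k : R.

Lemma mulr_expRN_le x : 0 < x -> x * expR (- x) <= 2 / x.
Proof.
move=> x0; have ex : 1 + x ^+ 2 / 2 <= expR x := expR_ge1Dxn 1 (ltW x0).
rewrite expRN ler_pdivrMr ?expR_gt0// mulrAC ler_pdivlMr//; lra.
Qed.

Lemma lambertWm1_spec k : 0 < k <= expR (-1) ->
  lambertWm1 (- k) <= -1 /\ lambertWm1 (- k) * expR (lambertWm1 (- k)) = - k.
Proof.
case/andP=> k0 ke; suff /(xgetPex 0) : exists w : R, w <= -1 /\ w * expR w = - k by [].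
pose s := Num.max 1 (2 / k); have s1 : 1 <= s by rewrite le_max lexx.
have s0 : 0 < s := lt_le_trans ltr01 s1.
have sk : s * expR (- s) <= k.
  apply: le_trans (mulr_expRN_le s0) _.
  by rewrite ler_pdivrMr// mulrC -ler_pdivrMr// le_max lexx orbT.
have cont : continuous (fun w : R => w * expR w).
  by move=> x; apply: continuousM; [exact: cvg_id | exact: continuous_expR].
have [w] : exists2 w, w \in `[- s, - 1] & w * expR w = - k.
  apply: IVT; [by rewrite lerN2 | exact: continuous_subspaceT cont |].
  apply/andP; split; rewrite ?ge_min ?le_max; apply/orP.
    by right; rewrite mulN1r lerN2 ke.
  by left; rewrite mulNr lerN2.
by rewrite in_itv /= => /andP[_ w1] wk; exists w.
Qed.

End lambertWm1.

Section nonneg_integral.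
Local Open Scope ereal_scope.

(* Unlike [ge0_le_integral] this needs no measurability: the integral of a
   nonnegative function is the supremum over its simple minorants. *)
Lemma ge0_le_integralT d (T : measurableType d) (R : realType)
    (mu : {measure set T -> \bar R}) (f g : T -> \bar R) :
  (forall x, 0 <= f x) -> (forall x, f x <= g x) ->
  \int[mu]_x f x <= \int[mu]_x g x.
Proof.
move=> f0 fg; have g0 x : 0 <= g x := le_trans (f0 x) (fg x).
rewrite !ge0_integralTE//; apply: ereal_sup_le => _ [h hf <-].
by exists h => //= x; exact: le_trans (hf x) (fg x).
Qed.

Lemma integral_Rn_ge0 (R : realType) d (f : d.-tuple R -> \bar R) :
  (forall u, 0 <= f u) -> 0 <= integral_Rn f.
Proof.
elim: d f => [|n IH] f f0 /=; first exact: f0.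
by apply: integral_ge0 => x _; apply: IH => t; exact: f0.
Qed.

Lemma ge0_le_integral_Rn (R : realType) d (f g : d.-tuple R -> \bar R) :
  (forall u, 0 <= f u) -> (forall u, f u <= g u) ->
  integral_Rn f <= integral_Rn g.
Proof.
elim: d f g => [|n IH] f g f0 fg /=; first exact: fg.
apply: ge0_le_integralT => x; first by apply: integral_Rn_ge0 => t; exact: f0.
by apply: IH => t; [exact: f0 | exact: fg].
Qed.

End nonneg_integral.

Lemma integral_RnZ_prod (R : realType) (g : R -> R) (I : R) :
  measurable_fun setT g -> (forall x, 0 <= g x) ->
  (\int[lebesgue_measure]_x (g x)%:E = I%:E)%E ->
  forall d (c : R), 0 <= c ->
  integral_Rn (fun u : d.-tuple R => (c * \prod_(i < d) g (tnth u i))%:E) =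
  (c * I ^+ d)%:E.
Proof.
move=> mg g0 gI; have I0 : 0 <= I.
  by rewrite -lee_fin -gI; apply: integral_ge0 => x _; rewrite lee_fin.
elim=> [|n IH] c c0 /=; first by rewrite big_ord0 expr0.
transitivity (\int[lebesgue_measure]_(x in [set: R]) ((c * I ^+ n)%:E * (g x)%:E))%E.
  apply: eq_integral => x _.
  rewrite -EFinM (_ : c * I ^+ n * g x = (c * g x) * I ^+ n); last by ring.
  rewrite -IH ?mulr_ge0//; congr integral_Rn; apply: funext => t.
  by rewrite big_ord_recl tnth0; under eq_bigr do rewrite tnthS; rewrite mulrA.
rewrite ge0_integralZl ?gI -?EFinM ?exprSr ?mulrA//.
- by apply/measurable_EFinP.
- by move=> x _; rewrite lee_fin.
- by rewrite lee_fin mulr_ge0// exprn_ge0.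
Qed.

Lemma integral_normal_fun (R : realType) (m s : R) : s != 0 ->
  (\int[lebesgue_measure]_x (normal_fun m s x)%:E =
   (Num.sqrt (s ^+ 2 * pi *+ 2))%:E)%E.
Proof.
move=> s0; have peak0 := normal_peak_gt0 s0.
transitivity (\int[lebesgue_measure]_x ((normal_peak s)^-1%:E * (normal_pdf m s x)%:E))%E.
  apply: eq_integral => x _.
  by rewrite normal_pdfE// -EFinM mulrA mulVf ?mul1r// gt_eqF.
rewrite ge0_integralZl ?integral_normal_pdf ?mule1 ?invrK//.
- by apply/measurable_EFinP; exact: measurable_normal_pdf.
- by move=> x _; rewrite lee_fin normal_pdf_ge0.
Qed.

Lemma sqrtrXn_powR (R : realType) (z : R) n : 0 <= z ->
  Num.sqrt z ^+ n = z `^ (n%:R / 2).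
Proof.
by move=> z0; rewrite -powR12_sqrt// -powR_mulrn ?powR_ge0// -powRrM mulrC.
Qed.

Section gaussian_tail.
Variables (R : realType) (d : nat).
Implicit Types (u : d.-tuple R) (M s t : R).

Lemma eucl_norm_ge0 u : 0 <= eucl_norm u.
Proof. exact: sqrtr_ge0. Qed.

Lemma sqr_eucl_norm u : eucl_norm u ^+ 2 = \sum_(i < d) tnth u i ^+ 2.
Proof. by rewrite sqr_sqrtr// sumr_ge0// => i _; exact: sqr_ge0. Qed.

Lemma prod_normal_fun u s :
  \prod_(i < d) normal_fun 0 s (tnth u i) =
  expR (- eucl_norm u ^+ 2 / (s ^+ 2 *+ 2)).
Proof.
rewrite /normal_fun -expR_sum sqr_eucl_norm -sumrN mulr_suml.
by under eq_bigr do rewrite subr0.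
Qed.

Definition gauss_tail M u : R :=
  if M <= eucl_norm u then expR (- eucl_norm u ^+ 2 / 2) else 0.

Lemma gauss_tail_ge0 M u : 0 <= gauss_tail M u.
Proof. by rewrite /gauss_tail; case: ifP => _; rewrite ?expR_ge0. Qed.

Lemma gauss_tail_le_normal_prod M t u : 0 <= M -> 1 <= t ->
  gauss_tail M u <=
  expR (- (1 - t^-1) * M ^+ 2 / 2) *
    \prod_(i < d) normal_fun 0 (Num.sqrt t) (tnth u i).
Proof.
move=> M0 t1; have t0 : 0 < t := lt_le_trans ltr01 t1.
rewrite prod_normal_fun (sqr_sqrtr (ltW t0)) -expRD.
rewrite /gauss_tail; case: ifP => [MN|_]; last exact: expR_ge0.
rewrite ler_expR.
have t'0 : 0 <= 1 - t^-1 by rewrite subr_ge0 invf_le1.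
have MN2 : M ^+ 2 <= eucl_norm u ^+ 2 by rewrite ler_sqr ?nnegrE ?eucl_norm_ge0.
have -> : (t *+ 2)^-1 = t^-1 / 2 by rewrite -[t *+ 2]mulr_natr invfM.
have := ler_wpM2l t'0 MN2; lra.
Qed.

Lemma integral_gauss_tail_le M t : 0 <= M -> 1 <= t ->
  (integral_Rn (fun u => (gauss_tail M u)%:E) <=
   (expR (- (1 - t^-1) * M ^+ 2 / 2) * (t * pi *+ 2) `^ (d%:R / 2))%:E)%E.
Proof.
move=> M0 t1; have t0 : 0 <= t := le_trans ler01 t1.
have st0 : Num.sqrt t != 0 by rewrite gt_eqF ?sqrtr_gt0 ?(lt_le_trans ltr01 t1).
have -> : (t * pi *+ 2) `^ (d%:R / 2) = Num.sqrt (Num.sqrt t ^+ 2 * pi *+ 2) ^+ d.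
  by rewrite sqr_sqrtr// sqrtrXn_powR// mulrn_wge0// mulr_ge0// ltW// pi_gt0.
rewrite -(integral_RnZ_prod (measurable_normal_fun 0 _) (normal_fun_ge0 0 _)
  (integral_normal_fun 0 st0)) ?expR_ge0//.
apply: ge0_le_integral_Rn => u; first by rewrite lee_fin gauss_tail_ge0.
by rewrite lee_fin gauss_tail_le_normal_prod.
Qed.

Lemma integral_gauss_tail_le_2pi M : 0 <= M ->
  (integral_Rn (fun u => (gauss_tail M u)%:E) <= ((pi *+ 2) `^ (d%:R / 2))%:E)%E.
Proof.
move=> M0; apply: le_trans (integral_gauss_tail_le M0 (lexx 1)) _.
by rewrite invr1 subrr oppr0 !mul0r expR0 !mul1r.
Qed.

Lemma integral_gauss_tail_le_lambertWm1 M k :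
  0 < k <= expR (-1) -> 0 <= M -> d%:R * - lambertWm1 (- k) <= M ^+ 2 ->
  (integral_Rn (fun u => (gauss_tail M u)%:E) <=
   ((2 * pi * expR 1 * k) `^ (d%:R / 2))%:E)%E.
Proof.
move=> /lambertWm1_spec[W1 WE] M0; set m := - lambertWm1 (- k) => dm.
have m1 : 1 <= m by rewrite /m lerNr.
apply: le_trans (integral_gauss_tail_le M0 m1) _.
have -> : 2 * pi * expR 1 * k = expR (1 - m) * (m * pi *+ 2).
  by rewrite -[k]opprK -WE expRD -mulr_natr /m opprK; ring.
have mpi0 : 0 <= m * pi *+ 2.
  by apply/mulrn_wge0/mulr_ge0; [exact: le_trans ler01 m1 | exact: ltW (pi_gt0 R)].
rewrite lee_fin powRM ?expR_ge0//; apply: ler_wpM2r; first exact: powR_ge0.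
rewrite -expRM ler_expR.
have m'0 : 0 <= 1 - m^-1 by rewrite subr_ge0 invf_le1// (lt_le_trans ltr01).
have : (1 - m^-1) * (d%:R * m) = d%:R * (m - 1).
  by field; rewrite gt_eqF// (lt_le_trans ltr01).
have := ler_wpM2l m'0 dm; lra.
Qed.

End gaussian_tail.

Theorem lemma3p6 (R : realType) (d : nat) (hd : (1 <= d)%N) (nu M : R)
  (hnu : 0 < nu)
  (hM : Num.sqrt (- (d%:R * lambertWm1 (- (nu `^ (2 / d%:R)) / (2 * pi * expR 1)))) <= M) :
  (integral_Rn (fun u : d.-tuple R =>
     (if M <= eucl_norm u then expR (- (eucl_norm u ^+ 2) / 2) else 0)%:E)
   <= nu%:E)%E.
Proof.
set P := nu `^ (2 / d%:R) in hM.
have d0 : 0 < d%:R :> R by rewrite ltr0n.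
have nuE : nu = P `^ (d%:R / 2).
  by rewrite -powRrM (_ : _ * _ = 1) ?powRr1 ?ltW//; field; rewrite gt_eqF.
have M0 : 0 <= M := le_trans (sqrtr_ge0 _) hM.
have pi0 := pi_gt0 R.
rewrite nuE; have [P_ge|P_lt] := lerP (pi *+ 2) P.
  apply: le_trans (integral_gauss_tail_le_2pi d M0) _.
  by rewrite lee_fin ge0_ler_powR ?nnegrE//; lra.
have K0 : 0 < 2 * pi * expR 1 :> R by rewrite !mulr_gt0 ?expR_gt0.
rewrite mulNr in hM; set k := P / _ in hM.
rewrite (_ : P = 2 * pi * expR 1 * k); last by rewrite mulrC divfK ?gt_eqF.
apply: integral_gauss_tail_le_lambertWm1 => //.
- rewrite divr_gt0 ?powR_gt0//= ler_pdivrMr// expRN mulrCA mulVf ?gt_eqF ?expR_gt0//.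
  by rewrite mulr1 mulr_natl ltW.
- by rewrite mulrN -ler_sqrt ?sqr_ge0// sqrtr_sqr ger0_norm.
Qed.
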